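(* Let $\Sigma\supseteq\Sigma_m$ be a signature and $E\supseteq\mathrm{Md}$ a set of $\Sigma$-equations such that $(\Sigma,E)$ has the propagation property for pseudo units and the propagation property for pseudo zeros. Then $E$ is a complete axiomatisation of the equational theory of $\mathrm{Mod}_\Sigma(E\cup\mathrm{IL})$: for all $\Sigma$-terms $r,s$, $E\vdash r=s$ (in equational logic) if and only if $r=s$ holds in every $\Sigma$-structure satisfying all equations of $E$ and the inverse law $\mathrm{IL}$.
   Context: $\Sigma_m=(0,1,+,\cdot,-,{}^{-1})$; $\mathrm{Md}$ is the set of equations $(x+y)+z=x+(y+z)$, $x+y=y+x$, $x+0=x$, $x+(-x)=0$, $(x\cdot y)\cdot z=x\cdot(y\cdot z)$, $x\cdot y=y\cdot x$, $1\cdot x=x$, $x\cdot(y+z)=x\cdot y+x\cdot z$, $(x^{-1})^{-1}=x$, $x\cdot(x\cdot x^{-1})=x$. $1_t$ abbreviates $t\cdot t^{-1}$, $0_t$ abbreviates $1+(-1_t)$. The inverse law $\mathrm{IL}$ is the conditional axiom $x\neq 0\rightarrow x\cdot x^{-1}=1$ (universally quantified). $\mathrm{Mod}_\Sigma(E\cup\mathrm{IL})$ is the class of $\Sigma$-structures satisfying $E$ and $\mathrm{IL}$. $(\Sigma,E)$ has the propagation property for pseudo units if for all $\Sigma$-terms $t,r$ and every context $C[\,]$, $E\vdash 1_t\cdot C[r]=1_t\cdot C[1_t\cdot r]$; it has the propagation property for pseudo zeros if for all $\Sigma$-terms $t,r$ and every context $C[\,]$, $E\vdash 0_t\cdot C[r]=0_t\cdot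 C[0_t\cdot r]$. *)

From mathcomp Require Import all_boot.
Set Implicit Arguments. Unset Strict Implicit. Unset Printing Implicit Defensive.

Section UA.
(* A signature Sigma containing Sigma_m = (0,1,+,.,-,^-1): the meadow symbols
   plus an arbitrary type X of further function symbols with arities arX. *)
Variables (X : Type) (arX : X -> nat).

Inductive sym : Type :=
  s_zero | s_one | s_add | s_mul | s_opp | s_inv | s_ext of X.

Definition ar (f : sym) : nat :=
  match f with
  | s_zero | s_one => 0
  | s_add | s_mul => 2
  | s_opp | s_inv => 1
  | s_ext x => arX x
  end.

Inductive term : Type :=
  | Var of nat
  | App (f : sym) of ('I_(ar f) -> term).
Arguments App f _ : clear implicits.

Definition args2 (a b : term) : 'I_2 -> term :=
  fun i => if val i == 0 then a else b.

Definition tzero : term := App s_zero (fun _ => Var 0).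
Definition tone : term := App s_one (fun _ => Var 0).
Definition tadd (a b : term) : term := App s_add (args2 a b).
Definition tmul (a b : term) : term := App s_mul (args2 a b).
Definition topp (a : term) : term := App s_opp (fun _ => a).
Definition tinv (a : term) : term := App s_inv (fun _ => a).

Definition one_t (t : term) : term := tmul t (tinv t).
Definition zero_t (t : term) : term := tadd tone (topp (one_t t)).

Fixpoint subst (s : nat -> term) (t : term) : term :=
  match t with
  | Var n => s n
  | App f a => App f (fun i => subst s (a i))
  end.

Inductive ctx : Type :=
  | Hole
  | CApp (f : sym) (j : 'I_(ar f)) (a : 'I_(ar f) -> term) (c : ctx).
Arguments CApp f j a c : clear implicits.

Fixpoint plug (c : ctx) (r : term) : term :=
  match c with
  | Hole => r
  | CApp f j a c' => App f (fun i => if i == j then plug c' r else a i)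
  end.

Inductive derives (E : term -> term -> Prop) : term -> term -> Prop :=
  | d_ax l r : E l r -> derives E l r
  | d_refl t : derives E t t
  | d_sym t u : derives E t u -> derives E u t
  | d_trans t u w : derives E t u -> derives E u w -> derives E t w
  | d_subst (s : nat -> term) t u : derives E t u -> derives E (subst s t) (subst s u)
  | d_cong (f : sym) (a b : 'I_(ar f) -> term) :
      (forall i, derives E (a i) (b i)) -> derives E (App f a) (App f b).

(* the equations Md (x = Var 0, y = Var 1, z = Var 2) *)
Inductive Md : term -> term -> Prop :=
  | md1 : Md (tadd (tadd (Var 0) (Var 1)) (Var 2)) (tadd (Var 0) (tadd (Var 1) (Var 2)))
  | md2 : Md (tadd (Var 0) (Var 1)) (tadd (Var 1) (Var 0))
  | md3 : Md (tadd (Var 0) tzero) (Var 0)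
  | md4 : Md (tadd (Var 0) (topp (Var 0))) tzero
  | md5 : Md (tmul (tmul (Var 0) (Var 1)) (Var 2)) (tmul (Var 0) (tmul (Var 1) (Var 2)))
  | md6 : Md (tmul (Var 0) (Var 1)) (tmul (Var 1) (Var 0))
  | md7 : Md (tmul tone (Var 0)) (Var 0)
  | md8 : Md (tmul (Var 0) (tadd (Var 1) (Var 2)))
             (tadd (tmul (Var 0) (Var 1)) (tmul (Var 0) (Var 2)))
  | md9 : Md (tinv (tinv (Var 0))) (Var 0)
  | md10 : Md (tmul (Var 0) (tmul (Var 0) (tinv (Var 0)))) (Var 0).

Definition prop_pseudo_units (E : term -> term -> Prop) : Prop :=
  forall (t r : term) (C : ctx),
    derives E (tmul (one_t t) (plug C r)) (tmul (one_t t) (plug C (tmul (one_t t) r))).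

Definition prop_pseudo_zeros (E : term -> term -> Prop) : Prop :=
  forall (t r : term) (C : ctx),
    derives E (tmul (zero_t t) (plug C r)) (tmul (zero_t t) (plug C (tmul (zero_t t) r))).

Record structure : Type := Structure {
  carrier : Type;
  interp : forall f : sym, ('I_(ar f) -> carrier) -> carrier }.

Fixpoint eval (M : structure) (v : nat -> carrier M) (t : term) : carrier M :=
  match t with
  | Var n => v n
  | App f a => @interp M f (fun i => eval v (a i))
  end.

Definition valid (M : structure) (l r : term) : Prop :=
  forall v : nat -> carrier M, eval v l = eval v r.

Definition sat_eqs (E : term -> term -> Prop) (M : structure) : Prop :=
  forall l r, E l r -> valid M l r.

Definition IL (M : structure) : Prop :=
  forall v : nat -> carrier M,
    eval v (Var 0) <> eval v tzero ->
    eval v (tmul (Var 0) (tinv (Var 0))) = eval v tone.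

End UA.

From mathcomp Require Import all_boot.
From mathcomp Require Import boolp classical_sets.
From Stdlib Require Import Setoid Morphisms.
Set Implicit Arguments. Unset Strict Implicit. Unset Printing Implicit Defensive.

(* For completeness, assume
   that r = s is not derivable from E.  By Zorn's lemma there is a congruence M
   on terms which contains derivability from E, does not identify r and s, and
   is maximal with these properties.  The term model T/M satisfies E, and the
   generic valuation refutes r = s in it.  It remains to see that T/M satisfies
   the inverse law.  For a term u obeying the propagation property, the
   relation  a ~ b := M (u * a) (u * b)  is again such a congruence, extending
   M.  Taking u = 1_x and u = 0_x, maximality forces one of them to equal M
   (otherwise r ~ s for both, and r = 1_x r + 0_x r gives M r s).  If it is
   the 0_x-relation then 0_x x = 0 yields M x 0; if it is the 1_x-relation
   then 1_x 1_x = 1_x yields M (x x^-1) 1: this is the inverse law. *)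

Section Terms.
Variables (X : Type) (arX : X -> nat).
Notation T := (term arX).

Lemma eval_subst (M : structure arX) (v : nat -> carrier M) (sg : nat -> T) (t : T) :
  eval v (subst sg t) = eval (fun n => eval v (sg n)) t.
Proof.
elim: t => [n|f a IH] //=; congr interp; apply: funext => i; exact: IH.
Qed.

Lemma subst_var (t : T) : subst (@Var _ arX) t = t.
Proof. elim: t => [n|f a IH] //=; congr App; apply: funext => i; exact: IH. Qed.

Lemma subst_args2 (sg : nat -> T) (a b : T) :
  (fun i => subst sg (args2 a b i)) = args2 (subst sg a) (subst sg b).
Proof. by apply: funext => i; rewrite /args2; case: ifP. Qed.

Lemma subst_tadd (sg : nat -> T) (a b : T) :
  subst sg (tadd a b) = tadd (subst sg a) (subst sg b).
Proof. by rewrite /= subst_args2. Qed.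

Lemma subst_tmul (sg : nat -> T) (a b : T) :
  subst sg (tmul a b) = tmul (subst sg a) (subst sg b).
Proof. by rewrite /= subst_args2. Qed.

Lemma subst_tzero (sg : nat -> T) : subst sg (tzero arX) = tzero arX.
Proof. by congr App; apply: funext => -[]. Qed.

Lemma subst_tone (sg : nat -> T) : subst sg (tone arX) = tone arX.
Proof. by congr App; apply: funext => -[]. Qed.

Definition subst_meadowE := (subst_tadd, subst_tmul, subst_tzero, subst_tone).

End Terms.

Lemma soundness (X : Type) (arX : X -> nat) (E : term arX -> term arX -> Prop) r s :
  derives E r s -> forall M : structure arX, sat_eqs E M -> valid M r s.
Proof.
move=> Drs M ME; elim: Drs => {r s} [l r /ME //|//|t u _ IH v|t u w _ IH1 _ IH2 v|
  sg t u _ IH v|f a b _ IH v] /=.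
- by rewrite IH.
- by rewrite IH1 IH2.
- by rewrite !eval_subst IH.
- by congr interp; apply: funext => i; exact: IH.
Qed.

Section Congruences.
Variables (X : Type) (arX : X -> nat).
Notation T := (term arX).

Definition term_rel := T -> T -> Prop.

Definition subrel (R S : term_rel) : Prop := forall a b, R a b -> S a b.

Record congruence (R : term_rel) : Prop := Congruence {
  cong_refl : forall a, R a a;
  cong_sym : forall a b, R a b -> R b a;
  cong_trans : forall a b c, R a b -> R b c -> R a c;
  cong_arg : forall f (j : 'I_(ar arX f)) (a : 'I_(ar arX f) -> T) x y,
    R x y -> R (plug (CApp j a (Hole arX)) x) (plug (CApp j a (Hole arX)) y) }.

Variable R : term_rel.
Hypothesis congR : congruence R.

Lemma cong_plug (C : ctx arX) x y : R x y -> R (plug C x) (plug C y).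
Proof. by move=> Rxy; elim: C => //= f j a C IH; exact: (cong_arg congR _ _ IH). Qed.

(* Compatibility with all arguments at once: replace them one at a time, where
   mix k takes the arguments below k from b and the others from a. *)
Lemma cong_app f (a b : 'I_(ar arX f) -> T) :
  (forall i, R (a i) (b i)) -> R (App a) (App b).
Proof.
move=> Rab; pose mix k (i : 'I_(ar arX f)) := if (i < k)%N then b i else a i.
have mixE : mix (ar arX f) = b by apply: funext => i; rewrite /mix ltn_ord.
rewrite -mixE; move: (ar arX f) => n; elim: n => [|k IH].
  by have -> : mix 0 = a by []; exact: cong_refl.
case: (ltnP k (ar arX f)) => [ltk|lek]; last first.
  have -> // : mix k.+1 = mix k.
  apply: funext => i; have ltik : (i < k)%N := leq_trans (ltn_ord i) lek.
  by rewrite /mix ltik ltnS ltnW.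
apply: (cong_trans congR IH); set j := Ordinal ltk.
have /funext -> : mix k =1 fun i => if i == j then a j else mix k i.
  by move=> i; case: eqP => [->|//]; rewrite /mix ltnn.
have /funext -> : mix k.+1 =1 fun i => if i == j then b j else mix k i.
  move=> i; case: eqP => [->|/eqP nij]; first by rewrite /mix ltnSn.
  by rewrite /mix ltnS leq_eqVlt -[k]/(val j) (inj_eq val_inj) (negbTE nij).
exact: (cong_arg congR _ _ (Rab j)).
Qed.

Lemma cong_tadd a a' b b' : R a a' -> R b b' -> R (tadd a b) (tadd a' b').
Proof. by move=> Ra Rb; apply: cong_app => i; rewrite /args2; case: ifP. Qed.

Lemma cong_tmul a a' b b' : R a a' -> R b b' -> R (tmul a b) (tmul a' b').
Proof. by move=> Ra Rb; apply: cong_app => i; rewrite /args2; case: ifP. Qed.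

Lemma cong_subst (s1 s2 : nat -> T) t :
  (forall n, R (s1 n) (s2 n)) -> R (subst s1 t) (subst s2 t).
Proof. by move=> Rs; elim: t => [n|f a IH] //=; exact: cong_app. Qed.

End Congruences.
Arguments subrel {X arX} R S.

Lemma derives_congruence (X : Type) (arX : X -> nat) (E : term arX -> term arX -> Prop) :
  congruence (derives E).
Proof.
apply: Congruence; [exact: d_refl | exact: d_sym | exact: d_trans |].
move=> f j a x y Dxy; apply: d_cong => i /=; case: (i == j) => //; exact: d_refl.
Qed.

Section TermModel.
Variables (X : Type) (arX : X -> nat) (E : term arX -> term arX -> Prop).
Notation T := (term arX).
Variable M : term_rel arX.
Hypothesis congM : congruence M.
Hypothesis derivesM : subrel (derives E) M.

Definition rep (t : T) : T := sval (cid (ex_intro (M t) t (cong_refl congM t))).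

Lemma rep_spec t : M t (rep t).
Proof. exact: svalP. Qed.

Lemma rep_eq a b : M a b -> rep a = rep b.
Proof.
move=> Mab; rewrite /rep.
have eqM : M a = M b.
  apply: funext => c; apply: propext; split => [Mac|Mbc].
    exact: (cong_trans congM (cong_sym congM Mab) Mac).
  exact: (cong_trans congM Mab Mbc).
move: (cong_refl congM a) (cong_refl congM b); rewrite eqM => pa pb.
by rewrite (Prop_irrelevance (ex_intro _ a pa) (ex_intro _ b pb)).
Qed.

Lemma rep_M a b : rep a = rep b -> M a b.
Proof.
move=> eqab; apply: (cong_trans congM (rep_spec a)).
by rewrite eqab; apply: (cong_sym congM); exact: rep_spec.
Qed.

(* The term model T/M: normal forms rep t, operations applied to representatives. *)
Definition class := {t : T | rep t = t}.

Definition class_of (t : T) : class := exist _ (rep t) (esym (rep_eq (rep_spec t))).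

Definition term_model : structure arX :=
  {| carrier := class;
     interp := fun f (a : 'I_(ar arX f) -> class) => class_of (App (fun i => sval (a i))) |}.

Lemma class_eq (p q : carrier term_model) : sval p = sval q -> p = q.
Proof. by case: p => p hp; case: q => q hq /= eqpq; exact: eq_exist. Qed.

Lemma eval_term_model (v : nat -> carrier term_model) (t : T) :
  sval (eval v t) = rep (subst (fun n => sval (v n)) t).
Proof.
elim: t => [n|f a IH] /=; first by case: (v n).
apply: rep_eq; apply: (cong_app congM) => i.
by rewrite IH; apply: (cong_sym congM); exact: rep_spec.
Qed.

Lemma term_model_eq (v : nat -> carrier term_model) (t u : T) :
  eval v t = eval v u <-> M (subst (fun n => sval (v n)) t) (subst (fun n => sval (v n)) u).
Proof.
split=> [/(f_equal sval)|Mtu]; rewrite ?eval_term_model; first exact: rep_M.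
by apply: class_eq; rewrite !eval_term_model; exact: rep_eq.
Qed.

Lemma term_model_sat : sat_eqs E term_model.
Proof.
move=> l r Elr v; apply/term_model_eq; apply: derivesM.
by apply: d_subst; exact: d_ax.
Qed.

Lemma term_model_refutes r s : valid term_model r s -> M r s.
Proof.
move=> /(_ (fun n => class_of (Var arX n))) /term_model_eq /= Mrs.
have generic t : M t (subst (fun n => rep (Var arX n)) t).
  by rewrite -{1}(subst_var t); apply: (cong_subst congM) => n; exact: rep_spec.
apply: (cong_trans congM (generic r)); apply: (cong_trans congM Mrs).
exact: (cong_sym congM (generic s)).
Qed.

Lemma term_model_IL :
  (forall x, ~ M x (tzero arX) -> M (one_t x) (tone arX)) -> IL term_model.
Proof.
move=> ILM v /term_model_eq nx0; apply/term_model_eq.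
by rewrite !subst_meadowE; apply: ILM; rewrite -(subst_tzero (fun n => sval (v n))).
Qed.

End TermModel.

Section MaximalCongruence.
Variables (X : Type) (arX : X -> nat) (E : term arX -> term arX -> Prop).
Variables r s : term arX.
Hypothesis not_derivable : ~ derives E r s.

Definition separating (R : term_rel arX) : Prop :=
  [/\ congruence R, subrel (derives E) R & ~ R r s].

Lemma separating_derives : separating (derives E).
Proof. by split => //; exact: derives_congruence. Qed.

(* The union of a family F of relations together with derivability itself
   (so that the empty family is covered). *)
Definition union_derives (F : set (term_rel arX)) : term_rel arX :=
  fun a b => derives E a b \/ exists2 R, F R & R a b.

Lemma separating_chain (F : set (term_rel arX)) :
  (forall R, F R -> separating R) -> total_on F subrel -> separating (union_derives F).
Proof.
move=> sepF totF; have congF R : F R -> congruence R by case/sepF.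
have DF R : F R -> subrel (derives E) R by case/sepF.
split; last first.
- case=> [//|[R /sepF[_ _ nRrs] //]].
- by move=> a b Dab; left.
split=> [a|a b|a b c|f j a x y]; first by left; exact: d_refl.
- case=> [Dab|[R FR Rab]]; first by left; exact: d_sym.
  by right; exists R => //; exact: (cong_sym (congF R FR)).
- case=> [Dab|[R FR Rab]] [Dbc|[R' FR' Rbc]].
  + by left; exact: d_trans Dab Dbc.
  + by right; exists R' => //; exact: (cong_trans (congF R' FR') (DF R' FR' _ _ Dab)).
  + by right; exists R => //; exact: (cong_trans (congF R FR) Rab (DF R FR _ _ Dbc)).
  + have [RR'|R'R] := totF R R' FR FR'.
      by right; exists R' => //; exact: (cong_trans (congF R' FR') (RR' _ _ Rab)).
    by right; exists R => //; exact: (cong_trans (congF R FR) Rab (R'R _ _ Rbc)).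
- case=> [Dxy|[R FR Rxy]]; first by left; exact: (cong_arg (derives_congruence E)).
  by right; exists R => //; exact: (cong_arg (congF R FR)).
Qed.

Lemma maximal_separating :
  exists M, separating M /\ forall S, separating S -> subrel M S -> subrel S M.
Proof.
pose sep := {R : term_rel arX | separating R}.
pose le (R S : sep) := `[< subrel (sval R) (sval S) >].
have [||F totF|M maxM] := @ZL_preorder sep (exist _ _ separating_derives) le.
- by move=> R; apply/asboolP.
- by move=> R S U /asboolP RS /asboolP SU; apply/asboolP => a b /RS /SU.
- pose G (R : term_rel arX) := exists2 S, F S & sval S = R.
  have totG : total_on G subrel.
    by move=> _ _ [R FR <-] [S FS <-]; have [/asboolP|/asboolP] := totF R S FR FS; auto.
  have sepG R : G R -> separating R by move=> [S _ <-]; exact: svalP.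
  exists (exist _ _ (separating_chain sepG totG)) => R FR; apply/asboolP => a b Rab.
  by right; exists (sval R) => //; exists R.
- exists (sval M); split=> [|S sepS MS]; first exact: svalP.
  by have /asboolP := maxM (exist _ S sepS) (introT (asboolP _) MS).
Qed.

End MaximalCongruence.

Section MeadowIdentities.
Variables (X : Type) (arX : X -> nat) (E : term arX -> term arX -> Prop).
Hypothesis E_Md : forall l r, Md l r -> E l r.
Notation T := (term arX).
Notation D := (derives E).

#[local] Instance derives_equivalence : Equivalence D.
Proof. by split; [exact: d_refl | exact: d_sym | exact: d_trans]. Qed.

#[local] Instance tadd_derives : Proper (D ==> D ==> D) (@tadd X arX).
Proof. by move=> a a' Da b b' Db; exact: (cong_tadd (derives_congruence E)). Qed.

#[local] Instance tmul_derives : Proper (D ==> D ==> D) (@tmul X arX).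
Proof. by move=> a a' Da b b' Db; exact: (cong_tmul (derives_congruence E)). Qed.

#[local] Instance topp_derives : Proper (D ==> D) (@topp X arX).
Proof. by move=> a a' Da; apply: d_cong. Qed.

(* Let [done] close reflexive derivations left over by setoid rewriting. *)
#[local] Hint Extern 0 (derives _ _ _) => reflexivity : core.

Declare Scope meadow_scope.
Local Notation "a + b" := (tadd a b) : meadow_scope.
Local Notation "a * b" := (tmul a b) : meadow_scope.
Local Notation "- a" := (topp a) : meadow_scope.
Local Notation "0" := (tzero arX) : meadow_scope.
Local Notation "1" := (tone arX) : meadow_scope.
Local Open Scope meadow_scope.

Definition sg3 (a b c : T) (n : nat) : T :=
  match n with 0 => a | 1 => b | _ => c end.

Lemma Md_instance (a b c : T) l r : Md l r -> D (subst (sg3 a b c) l) (subst (sg3 a b c) r).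
Proof. by move=> Mdlr; apply: d_subst; apply: d_ax; exact: E_Md. Qed.

Lemma addA a b c : D ((a + b) + c) (a + (b + c)).
Proof. by have := Md_instance a b c (md1 arX); rewrite !subst_meadowE. Qed.
Lemma addC a b : D (a + b) (b + a).
Proof. by have := Md_instance a b a (md2 arX); rewrite !subst_meadowE. Qed.
Lemma add0 a : D (a + 0) a.
Proof. by have := Md_instance a a a (md3 arX); rewrite !subst_meadowE. Qed.
Lemma addN a : D (a + - a) 0.
Proof. by have := Md_instance a a a (md4 arX); rewrite !subst_meadowE. Qed.
Lemma mulA a b c : D ((a * b) * c) (a * (b * c)).
Proof. by have := Md_instance a b c (md5 arX); rewrite !subst_meadowE. Qed.
Lemma mulC a b : D (a * b) (b * a).
Proof. by have := Md_instance a b a (md6 arX); rewrite !subst_meadowE. Qed.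
Lemma mul1 a : D (1 * a) a.
Proof. by have := Md_instance a a a (md7 arX); rewrite !subst_meadowE. Qed.
Lemma mulD a b c : D (a * (b + c)) (a * b + a * c).
Proof. by have := Md_instance a b c (md8 arX); rewrite !subst_meadowE. Qed.
Lemma mul_inv a : D (a * (a * tinv a)) a.
Proof. by have := Md_instance a a a (md10 arX); rewrite !subst_meadowE. Qed.

Lemma add0l a : D (0 + a) a.
Proof. by rewrite addC add0. Qed.

Lemma mul0 a : D (a * 0) 0.
Proof.
have double : D (a * 0) (a * 0 + a * 0) by rewrite -mulD add0.
transitivity (a * 0 + (a * 0 + - (a * 0))); first by rewrite addN add0.
by rewrite -addA -double addN.
Qed.

Lemma mulN a b : D (a * - b) (- (a * b)).
Proof.
have cancel : D (a * b + a * - b) 0 by rewrite -mulD addN mul0.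
transitivity (a * - b + (a * b + - (a * b))); first by rewrite addN add0.
by rewrite -addA (addC (a * - b)) cancel add0l.
Qed.

Lemma one_t_idem x : D (one_t x * one_t x) (one_t x).
Proof. by rewrite /one_t -mulA (mulC (x * tinv x) x) mul_inv. Qed.

Lemma zero_t_annihilates x : D (zero_t x * x) 0.
Proof. by rewrite mulC /zero_t mulD (mulC x 1) mul1 mulN /one_t mul_inv addN. Qed.

Lemma one_t_zero_t_split x a : D a (one_t x * a + zero_t x * a).
Proof.
rewrite (mulC (one_t x)) (mulC (zero_t x)) -mulD /zero_t.
by rewrite (addC 1) -addA addN add0l mulC mul1.
Qed.

End MeadowIdentities.

Definition propagates (X : Type) (arX : X -> nat) (E : term arX -> term arX -> Prop)
    (u : term arX) : Prop :=
  forall (a : term arX) (C : ctx arX),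
    derives E (tmul u (plug C a)) (tmul u (plug C (tmul u a))).

Section Relativisation.
Variables (X : Type) (arX : X -> nat) (E : term arX -> term arX -> Prop).
Variables (M : term_rel arX) (u : term arX).
Hypothesis congM : congruence M.
Hypothesis derivesM : subrel (derives E) M.

Definition relativise : term_rel arX := fun a b => M (tmul u a) (tmul u b).

Lemma relativise_extends : subrel M relativise.
Proof. by move=> a b Mab; apply: (cong_tmul congM (cong_refl congM u) Mab). Qed.

Lemma relativise_congruence : propagates E u -> congruence relativise.
Proof.
move=> prop_u; split=> [a|a b|a b c|f j a x y Mxy]; rewrite /relativise.
- exact: (cong_refl congM).
- exact: (cong_sym congM).
- exact: (cong_trans congM).
- pose C := CApp j a (Hole arX).
  apply: (cong_trans congM (derivesM (prop_u x C))).
  apply: (cong_trans congM _ (derivesM (d_sym (prop_u y C)))).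
  exact: (cong_tmul congM (cong_refl congM u) (cong_plug congM C Mxy)).
Qed.

End Relativisation.

Section InverseLaw.
Variables (X : Type) (arX : X -> nat) (E : term arX -> term arX -> Prop).
Hypothesis E_Md : forall l r, Md l r -> E l r.
Hypothesis pseudo_units : prop_pseudo_units E.
Hypothesis pseudo_zeros : prop_pseudo_zeros E.
Variables (r s : term arX) (M : term_rel arX).
Hypothesis sepM : separating E r s M.
Hypothesis maxM : forall S, separating E r s S -> subrel M S -> subrel S M.

Let congM : congruence M. Proof. by case: sepM. Qed.
Let derivesM : subrel (derives E) M. Proof. by case: sepM. Qed.

Let derives_join a b c : derives E a c -> derives E b c -> M a b.
Proof. by move=> Dac Dbc; apply: derivesM; exact: d_trans Dac (d_sym Dbc). Qed.

Lemma relativise_maximal u :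
  propagates E u -> ~ M (tmul u r) (tmul u s) -> subrel (relativise M u) M.
Proof.
move=> prop_u nMurs; apply: (maxM _ (relativise_extends u congM)).
split=> //; first exact: (relativise_congruence congM derivesM prop_u).
by move=> a b /derivesM; exact: (relativise_extends u congM).
Qed.

Lemma maximal_inverse_law x : ~ M x (tzero arX) -> M (one_t x) (tone arX).
Proof.
move=> nMx0.
have [M1|nM1] := EM (M (tmul (one_t x) r) (tmul (one_t x) s)); last first.
  apply: relativise_maximal (pseudo_units x) nM1 _ _ _.
  apply: (derives_join (one_t_idem E_Md x)).
  exact: d_trans (mulC E_Md _ _) (mul1 E_Md _).
have [M0|nM0] := EM (M (tmul (zero_t x) r) (tmul (zero_t x) s)).
  have [_ _ nMrs] := sepM; exfalso; apply: nMrs.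
  apply: (cong_trans congM (derivesM (one_t_zero_t_split E_Md x r))).
  apply: (cong_trans congM _ (derivesM (d_sym (one_t_zero_t_split E_Md x s)))).
  exact: (cong_tadd congM M1 M0).
case: nMx0; apply: relativise_maximal (pseudo_zeros x) nM0 _ _ _.
exact: derives_join (zero_t_annihilates E_Md x) (mul0 E_Md _).
Qed.

End InverseLaw.

Theorem theorem2 (X : Type) (arX : X -> nat) (E : term arX -> term arX -> Prop)
  (HMd : forall l r, Md l r -> E l r)
  (Hpu : prop_pseudo_units E) (Hpz : prop_pseudo_zeros E) :
  forall r s : term arX,
    derives E r s <-> (forall M : structure arX, sat_eqs E M -> IL M -> valid M r s).
Proof.
move=> r s; split=> [Drs M ME _|valid_rs]; first exact: soundness Drs M ME.
apply: contrapT => not_derivable.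
have [M [sepM maxM]] := maximal_separating not_derivable.
have [congM derivesM nMrs] := sepM.
apply: nMrs; apply: (@term_model_refutes _ _ _ congM); apply: valid_rs.
- exact: term_model_sat derivesM.
- exact: term_model_IL (maximal_inverse_law HMd Hpu Hpz sepM maxM).
Qed.
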